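(* Let $\varphi,\psi\in G$ satisfy $\gamma_{\psi/\varphi}>0$, and let $E$ and $F$ be symmetric spaces on $[0,1]$ with fundamental functions $\varphi$ and $\psi$, respectively. Then $E\subset F$ and the identity inclusion operator $I:E\to F$ is disjointly strictly singular.
   Context: All functions are Lebesgue measurable on $[0,1]$, $\mu$ is Lebesgue measure. A symmetric space (SS) on $[0,1]$ is a Banach space $E$ of measurable functions on $[0,1]$ such that: (1) if $y\in E$ and $|x(t)|\le |y(t)|$ then $x\in E$ and $\|x\|\le\|y\|$; (2) if $y\in E$ and $x,y$ are equimeasurable (i.e. $\mu\{|x|>\tau\}=\mu\{|y|>\tau\}$ for all $\tau>0$) then $x\in E$ and $\|x\|=\|y\|$. The fundamental function of $E$ is $f_E(t)=\|\chi_{(0,t)}\|_E$. $G$ denotes the class of all positive increasing concave functions on $(0,1]$. For a positive function $f$ on $(0,1]$, its dilation function is $\mathcal M_f(t)=\sup\{f(st)/f(s):0<s\le\min(1,1/t)\}$ for $t>0$, and its lower dilation index is $\gamma_f=\lim_{t\to0}\ln\mathcal M_f(t)/\ln t$. A bounded linear operator $T$ from a Banach lattice $X$ into a Banach space $Y$ is disjointly strictly singular (DSS) if there is no sequence of nonzero pairwise disjoint elements $x_n\in X$ such that the restriction of $T$ to their closed linear span $[x_n]$ is an isomorphism (onto its image). *)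

From HB Require Import structures.
From mathcomp Require Import all_boot all_order all_algebra.
From mathcomp Require Import all_classical all_reals all_analysis.
Set Implicit Arguments. Unset Strict Implicit. Unset Printing Implicit Defensive.
Import Order.TTheory GRing.Theory Num.Theory.
Import numFieldNormedType.Exports.
Local Open Scope classical_set_scope.
Local Open Scope ring_scope.

(* Functions on [0,1] are represented as R -> R; only their values on
   I01 = [0,1] matter (Lebesgue measure restricted to [0,1]). *)

Definition I01 {R : realType} : set R := `[0, 1]%classic.

Definition ae01 {R : realType} (P : R -> Prop) : Prop :=
  (@lebesgue_measure R).-negligible (I01 `&` [set t | ~ P t]).

Definition equimeasurable {R : realType} (x y : R -> R) : Prop :=
  forall tau : R, 0 < tau ->
    (@lebesgue_measure R) (I01 `&` [set t | tau < `|x t|]) =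
    (@lebesgue_measure R) (I01 `&` [set t | tau < `|y t|]).

Record SymSpace (R : realType) := {
  ss_mem : set (R -> R);
  ss_nrm : (R -> R) -> R;
  ss_meas : forall x, ss_mem x -> measurable_fun I01 x;
  ss_mem0 : ss_mem (fun _ => 0);
  ss_memD : forall x y, ss_mem x -> ss_mem y -> ss_mem (fun t => x t + y t);
  ss_memZ : forall (a : R) x, ss_mem x -> ss_mem (fun t => a * x t);
  ss_nrmD : forall x y, ss_mem x -> ss_mem y ->
     ss_nrm (fun t => x t + y t) <= ss_nrm x + ss_nrm y;
  ss_nrmZ : forall (a : R) x, ss_mem x -> ss_nrm (fun t => a * x t) = `|a| * ss_nrm x;
  ss_nrm_ge0 : forall x, ss_mem x -> 0 <= ss_nrm x;
  ss_nrm_eq0 : forall x, ss_mem x -> (ss_nrm x = 0 <-> ae01 (fun t => x t = 0));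
  ss_complete : forall u : nat -> R -> R, (forall n, ss_mem (u n)) ->
     (forall e : R, 0 < e -> exists N : nat, forall m n : nat, (N <= m)%N -> (N <= n)%N ->
        ss_nrm (fun t => u n t - u m t) < e) ->
     exists x, ss_mem x /\ forall e : R, 0 < e -> exists N : nat, forall n : nat, (N <= n)%N ->
        ss_nrm (fun t => u n t - x t) < e;
  ss_ideal : forall x y : R -> R, ss_mem y -> measurable_fun I01 x ->
     (forall t, I01 t -> `|x t| <= `|y t|) -> ss_mem x /\ ss_nrm x <= ss_nrm y;
  ss_symm : forall x y : R -> R, ss_mem y -> measurable_fun I01 x -> equimeasurable x y ->
     ss_mem x /\ ss_nrm x = ss_nrm y
}.

Definition has_fundamental_function {R : realType} (E : SymSpace R) (phi : R -> R) : Prop :=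
  forall t : R, 0 < t <= 1 ->
    ss_mem E (\1_(`]0, t[%classic) : R -> R) /\ ss_nrm E (\1_(`]0, t[%classic) : R -> R) = phi t.

Definition classG {R : realType} (f : R -> R) : Prop :=
  (forall t : R, 0 < t <= 1 -> 0 < f t) /\
  (forall s t : R, 0 < s -> s <= t -> t <= 1 -> f s <= f t) /\
  (forall s t l : R, 0 < s <= 1 -> 0 < t <= 1 -> 0 <= l <= 1 ->
      l * f s + (1 - l) * f t <= f (l * s + (1 - l) * t)).

Definition dilation {R : realType} (f : R -> R) (t : R) : R :=
  sup [set f (s * t) / f s | s in `]0, Num.min 1 t^-1]%classic].

Definition lower_dilation_index {R : realType} (f : R -> R) : R :=
  lim ((fun t => ln (dilation f t) / ln t) @ 0^'+).

Definition clspan {R : realType} (E : SymSpace R) (xs : nat -> R -> R) : set (R -> R) :=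
  [set y | ss_mem E y /\ forall e : R, 0 < e ->
     exists (N : nat) (a : nat -> R),
       ss_nrm E (fun t => y t - \sum_(i < N) a i * xs i t) < e].

(* the inclusion E -> F is disjointly strictly singular: there is no sequence
   of nonzero pairwise disjoint x_n in E such that the inclusion restricted to
   [x_n] is an isomorphism onto its image (i.e. bounded below there) *)
Definition inclusion_DSS {R : realType} (E F : SymSpace R) : Prop :=
  ~ exists xs : nat -> R -> R,
      (forall n, ss_mem E (xs n)) /\
      (forall n, ~ ae01 (fun t => xs n t = 0)) /\
      (forall n m, n <> m -> ae01 (fun t => xs n t * xs m t = 0)) /\
      exists c : R, 0 < c /\ forall y, clspan E xs y -> c * ss_nrm E y <= ss_nrm F y.

From HB Require Import structures.
From mathcomp Require Import all_boot all_order all_algebra.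
From mathcomp Require Import all_classical all_reals all_analysis.
From mathcomp Require Import ring lra.
From mathcomp Require Import measurable_realfun.
Set Implicit Arguments. Unset Strict Implicit. Unset Printing Implicit Defensive.
Import Order.TTheory GRing.Theory Num.Theory.
Import numFieldNormedType.Exports.
Local Open Scope classical_set_scope.
Local Open Scope ring_scope.

(* Write g = psi / phi.  A positive lower dilation index gives r in (0, 1/2] with
   g (s r) <= g s / 4; since g is also quasi-increasing (phi concave, psi
   increasing), g u <= C 4^-j whenever u <= r^j.  A bounded x in E whose support
   has measure <= r^j is dominated by the layer-cake function
   lam 1_{|x| > 0} + sum_k lam r^-(k+1) 1_{|x| > lam r^-k},  lam = 4 ||x||_E / phi 1.
   A level set {|x| > c} of measure m satisfies c phi m <= ||x||_E, so its F-norm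
   is at most ||x||_E g m / c, and Chebyshev's inequality in E gives m <= r^k for
   the k-th layer; summing, ||x||_F <= K 2^-j ||x||_E.  Truncations of an unbounded
   x are Cauchy in F and converge in measure to x, which removes boundedness; j = 0
   is the bounded inclusion.  Pairwise disjoint x_n have supports of summable
   measure, so one of them has measure <= r^j, contradicting c ||x_n||_E <=
   ||x_n||_F once K 2^-j < c. *)

Definition level {R : realType} (x : R -> R) (c : R) : set R :=
  I01 `&` [set t | c < `|x t|].

Section unit_interval.
Variable R : realType.
Notation mu := (@lebesgue_measure R).
Implicit Types (A : set R) (x : R -> R).

Lemma measurable_I01 : measurable (@I01 R).
Proof. exact: measurable_itv. Qed.

Lemma lebesgue_measure_I01 : mu I01 = 1%:E.
Proof. by rewrite /I01 lebesgue_measure_itv /= lte_fin ltr01 /= oppr0 adde0. Qed.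

Lemma measure_I01_le1 A : measurable A -> A `<=` I01 -> (mu A <= 1%:E)%E.
Proof.
by move=> mA AI; rewrite -lebesgue_measure_I01 le_measure // inE; [|exact: measurable_I01].
Qed.

Lemma measure_I01_fineK A : measurable A -> A `<=` I01 -> (fine (mu A))%:E = mu A.
Proof.
move=> mA AI; rewrite fineK // ge0_fin_numE ?measure_ge0 //.
by rewrite (le_lt_trans (measure_I01_le1 mA AI)) ?ltry.
Qed.

Lemma fine_measure_I01_le1 A : measurable A -> A `<=` I01 -> fine (mu A) <= 1.
Proof. by move=> mA AI; rewrite -lee_fin measure_I01_fineK // measure_I01_le1. Qed.

Lemma level_sub_I01 x c : level x c `<=` I01.
Proof. by move=> t []. Qed.

Lemma measurable_level x c : measurable_fun I01 x -> measurable (level x c).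
Proof.
move=> mx; have /(_ measurable_I01 `]c, +oo[%classic (measurable_itv _)) :
  measurable_fun I01 (fun t => `|x t|) by apply: measurableT_comp.
by congr measurable; apply/seteqP; split=> t /=; rewrite in_itv /= andbT.
Qed.

Lemma le_level x c d : c <= d -> level x d `<=` level x c.
Proof. by move=> cd t [It /= h]; split=> //=; apply: le_lt_trans h. Qed.

Lemma level_indic A c : A `<=` I01 -> 0 < c ->
  level (\1_A) c = if c < 1 then A else set0.
Proof.
move=> AI c0; apply/seteqP; split=> t.
  move=> [_ /=]; rewrite indicE; case: (boolP (t \in A)) => tA.
    by rewrite normr1 => ->; rewrite -inE.
  by rewrite normr0 ltNge (ltW c0).
by case: ifP => // c1 At; split; [exact: AI | rewrite /= indicE mem_set // normr1].
Qed.

Lemma indic_level x c t : I01 t -> \1_(level x c) t = (c < `|x t|)%R%:R :> R.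
Proof.
move=> It; rewrite indicE; case: (boolP (c < `|x t|)) => h.
  by rewrite mem_set.
by rewrite memNset // => -[_ /=]; apply/negP.
Qed.

Lemma ae01_eq0_of_level x : measurable_fun I01 x ->
  (forall c, 0 < c -> mu (level x c) = 0) -> ae01 (fun t => x t = 0).
Proof.
move=> mx x0; have null i : mu.-negligible (level x (i.+1%:R^-1)).
  by apply/negligibleP; [exact: measurable_level | apply: x0].
apply: negligibleS (negligible_bigcup null) => t [It /= /eqP xt].
have [n xn] : exists n : nat, `|x t|^-1 < n%:R.
  by exists (Num.bound `|x t|^-1); apply: archi_boundP.
exists n => //; split=> //=.
rewrite -(invrK `|x t|) ltf_pV2 ?posrE ?invr_gt0 ?normr_gt0 //.
by apply: lt_trans xn _; rewrite ltr_nat.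
Qed.

Lemma measure_I01_eq0 A : measurable A -> A `<=` I01 ->
  (forall e, 0 < e <= 1 -> (mu A <= e%:E)%E) -> mu A = 0.
Proof.
move=> mA AI small; apply/eqP; rewrite eq_le measure_ge0 andbT.
rewrite -measure_I01_fineK // lee_fin; apply/ler_addgt0Pr => e e0.
rewrite add0r -lee_fin measure_I01_fineK //.
have [e1|/ltW e1] := leP e 1; first by apply: small; rewrite e0.
by apply: le_trans (measure_I01_le1 mA AI) _; rewrite lee_fin.
Qed.

Lemma ae_disjoint_measure_le (S : nat -> set R) (delta : R) : 0 < delta ->
  (forall n, measurable (S n)) -> (forall n, S n `<=` I01) ->
  (forall n m, n <> m -> mu.-negligible (S n `&` S m)) ->
  exists n, (mu (S n) <= delta%:E)%E.
Proof.
move=> delta0 mS SI disj; apply/not_existsP => large.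
have {}large n : (delta%:E < mu (S n))%E by rewrite ltNge; apply/negP/large.
pose U k := \big[setU/set0]_(n < k) S n.
have mU k : measurable (U k) by apply: bigsetU_measurable.
have UI k : U k `<=` I01.
  by rewrite /U; elim/big_ind: _ => // A B AI BI t [/AI|/BI].
have US k : U k.+1 = U k `|` S k by rewrite /U big_ord_recr.
have Unull k m : (k <= m)%N -> mu.-negligible (U k `&` S m).
  elim: k => [|k IH] km; first by rewrite /U big_ord0 set0I; exact: negligible_set0.
  rewrite US setIUl; apply: negligibleU; first by apply: IH; apply: ltnW.
  by apply: disj => ek; move: km; rewrite ek ltnn.
have Ulow k : ((k%:R * delta)%:E <= mu (U k))%E.
  elim: k => [|k IH]; first by rewrite mul0r measure_ge0.
  have USnull : mu (U k `&` S k) = 0.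
    apply/negligibleP; last exact: Unull.
    exact: measurableI (mU k) (mS k).
  have Ufin : (mu (U k) < +oo)%E by rewrite -(measure_I01_fineK (mU k) (UI k)) ltry.
  rewrite US (@measureUfinl _ _ _ mu _ _ (mU k) (mS k) Ufin).
  rewrite -[X in (_ - X)%E]/(mu (U k `&` S k)) USnull sube0.
  by rewrite -natr1 mulrDl mul1r EFinD; apply: leeD => //; apply/ltW/large.
have [k kdelta] : exists k : nat, delta^-1 < k%:R.
  by exists (Num.bound delta^-1); apply: archi_boundP; rewrite invr_ge0 ltW.
have := le_trans (Ulow k) (measure_I01_le1 (mU k) (UI k)).
by rewrite lee_fin -ler_pdivlMr // div1r leNgt kdelta.
Qed.

End unit_interval.

Section symmetric_space.
Variables (R : realType) (S : SymSpace R).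
Notation mu := (@lebesgue_measure R).
Implicit Types (x y z w : R -> R).

Lemma ss_nrm0 : ss_nrm S (fun _ => 0) = 0.
Proof. by have := ss_nrmZ 0 (ss_mem0 S); rewrite normr0 !mul0r. Qed.

Lemma ss_memB x y : ss_mem S x -> ss_mem S y -> ss_mem S (fun t => x t - y t).
Proof.
move=> xS yS; have -> : (fun t => x t - y t) = (fun t => x t + (-1) * y t).
  by apply: funext => t; rewrite mulN1r.
by apply: ss_memD => //; apply: ss_memZ.
Qed.

Lemma ss_nrmBC x y : ss_mem S x -> ss_mem S y ->
  ss_nrm S (fun t => x t - y t) = ss_nrm S (fun t => y t - x t).
Proof.
move=> xS yS; have -> : (fun t => x t - y t) = (fun t => (-1) * (y t - x t)).
  by apply: funext => t; rewrite mulN1r opprB.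
by rewrite ss_nrmZ ?normrN ?normr1 ?mul1r //; apply: ss_memB.
Qed.

Lemma ss_mem_sum (u : nat -> R -> R) (N : nat) : (forall k, ss_mem S (u k)) ->
  ss_mem S (fun t => \sum_(k < N) u k t) /\
  ss_nrm S (fun t => \sum_(k < N) u k t) <= \sum_(k < N) ss_nrm S (u k).
Proof.
move=> uS; elim: N => [|N [sumS sum_le]].
  under eq_fun do rewrite big_ord0.
  by rewrite big_ord0 ss_nrm0; split => //; apply: ss_mem0.
under eq_fun do rewrite big_ord_recr /=.
rewrite big_ord_recr /=; split; first exact: ss_memD.
by apply: le_trans (ss_nrmD sumS (uS N)) _; rewrite lerD2r.
Qed.

Lemma ss_null w : measurable_fun I01 w -> ae01 (fun t => w t = 0) ->
  ss_mem S w /\ ss_nrm S w = 0.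
Proof.
move=> mw w0; have : equimeasurable w (fun _ => 0).
  move=> c c0; rewrite -!/(level _ c) (_ : level (fun=> 0) c = set0) ?measure0; last first.
    by apply/seteqP; split=> t //= [_]; rewrite normr0 ltNge (ltW c0).
  apply/negligibleP; first exact: measurable_level.
  apply: negligibleS w0 => t [It /= ct]; split=> // wt.
  by move: ct; rewrite wt normr0 ltNge (ltW c0).
by case/(ss_symm (ss_mem0 S) mw) => wS ->; rewrite ss_nrm0.
Qed.

Lemma ss_ae_eq x z : ss_mem S z -> measurable_fun I01 x ->
  ae01 (fun t => x t - z t = 0) -> ss_mem S x /\ ss_nrm S x <= ss_nrm S z.
Proof.
move=> zS mx xz0; have [xzS xz0'] := ss_null (measurable_funB mx (ss_meas zS)) xz0.
have -> : x = (fun t => z t + (x t - z t)) by apply: funext => t; rewrite addrC subrK.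
split; first exact: ss_memD.
by apply: le_trans (ss_nrmD zS xzS) _; rewrite xz0' addr0.
Qed.

Lemma ss_nrm_lim_le (u : nat -> R -> R) z (C : R) :
  ss_mem S z -> (forall n, ss_mem S (u n)) -> (forall n, ss_nrm S (u n) <= C) ->
  (forall e, 0 < e ->
     exists N, forall n, (N <= n)%N -> ss_nrm S (fun t => u n t - z t) < e) ->
  ss_nrm S z <= C.
Proof.
move=> zS uS uC uz; apply/ler_addgt0Pr => e e0.
have [N uNz] := uz e e0; have -> : z = (fun t => u N t + (z t - u N t)).
  by apply: funext => t; rewrite addrC subrK.
apply: le_trans (ss_nrmD (uS N) (ss_memB zS (uS N))) _.
by rewrite lerD // ss_nrmBC // ltW // uNz.
Qed.

Lemma ss_indic_null A : measurable A -> A `<=` I01 -> mu A = 0 ->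
  ss_mem S (\1_A) /\ ss_nrm S (\1_A) = 0.
Proof.
move=> mA AI A0; apply: ss_null; first exact: measurable_indic.
have nA : mu.-negligible A by apply/negligibleP.
apply: negligibleS nA => t [_ /=]; rewrite indicE.
by case: (boolP (t \in A)); rewrite ?inE.
Qed.

Lemma clspan_term (xs : nat -> R -> R) n :
  ss_mem S (xs n) -> clspan S xs (xs n).
Proof.
move=> xsS; split => // e e0; exists n.+1, (fun i => (i == n)%:R).
have -> : (fun t => xs n t - \sum_(i < n.+1) (i == n :> nat)%:R * xs i t) = (fun=> 0).
  apply: funext => t; rewrite big_ord_recr /= eqxx mul1r big1 ?add0r ?subrr //.
  by move=> i _; rewrite (ltn_eqF (ltn_ord i)) mul0r.
by rewrite ss_nrm0.
Qed.

End symmetric_space.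

Section fundamental_function.
Variables (R : realType) (S : SymSpace R) (f : R -> R).
Hypothesis Sf : has_fundamental_function S f.
Notation mu := (@lebesgue_measure R).
Implicit Types (A : set R).

Lemma equimeasurable_indic A : measurable A -> A `<=` I01 -> (0 < mu A)%E ->
  equimeasurable (\1_A) (\1_(`]0, fine (mu A)[%classic) : R -> R).
Proof.
move=> mA AI A0; have m0 : 0 < fine (mu A) by rewrite -lte_fin measure_I01_fineK.
have m1 := fine_measure_I01_le1 mA AI.
move=> c c0; rewrite -!/(level _ c) !level_indic //; last first.
  move=> t; rewrite /I01 /= !in_itv /= => /andP[t0 tm].
  by rewrite (ltW t0) (le_trans (ltW tm) m1).
case: ifP => // _; rewrite lebesgue_measure_itv /= lte_fin m0 /= oppr0 adde0.
by rewrite measure_I01_fineK.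
Qed.

Lemma ss_indic_pos A : measurable A -> A `<=` I01 -> (0 < mu A)%E ->
  ss_mem S (\1_A) /\ ss_nrm S (\1_A) = f (fine (mu A)).
Proof.
move=> mA AI A0; have [m0 m1] : 0 < fine (mu A) /\ fine (mu A) <= 1.
  by rewrite -lte_fin measure_I01_fineK ?fine_measure_I01_le1.
have [intS <-] := Sf (t := fine (mu A)) (ltac:(by rewrite m0 m1)).
apply: ss_symm intS _ _; [exact: measurable_indic | exact: equimeasurable_indic].
Qed.

Lemma ss_mem_indic A : measurable A -> A `<=` I01 -> ss_mem S (\1_A).
Proof.
move=> mA AI; have [A0|A0] := eqVneq (mu A) 0.
  by case: (ss_indic_null S mA AI A0).
by case: (ss_indic_pos mA AI _); rewrite // lt0e A0 measure_ge0.
Qed.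

End fundamental_function.

Section classG.
Variables (R : realType) (f : R -> R).
Hypothesis fG : classG f.

Lemma classG_gt0 t : 0 < t <= 1 -> 0 < f t.
Proof. by case: fG => f_gt0 _; apply: f_gt0. Qed.

Lemma classG_le s t : 0 < s -> s <= t -> t <= 1 -> f s <= f t.
Proof. by case: fG => _ [f_le _]; apply: f_le. Qed.

Lemma classG_dilate s t : 0 < s <= 1 -> 0 < t <= 1 -> t / 2 * f s <= f (s * t).
Proof.
case: fG => _ [_ f_concave] /andP[s0 s1] /andP[t0 t1].
(* s * t is the convex combination of s and s * t / 2 with weight t / (2 - t) *)
pose l := t / (2 - t); pose u := s * t / 2.
have l01 : 0 <= l <= 1 by rewrite divr_ge0 ?ler_pdivrMr /=; lra.
have u01 : 0 < u <= 1 by rewrite divr_gt0 ?mulr_gt0 //= ler_pdivrMr //; nra.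
have := f_concave s u l (ltac:(by rewrite s0 s1)) u01 l01.
have -> : l * s + (1 - l) * u = s * t by rewrite /l /u; field; lra.
have fu0 : 0 <= f u by apply/ltW/classG_gt0.
have l_ge : t / 2 <= l by rewrite ler_pdivrMr // /l mulrAC ler_pdivlMr; nra.
have fs0 : 0 <= f s by apply/ltW/classG_gt0; rewrite s0.
by apply: le_trans; rewrite -[leLHS]addr0 lerD ?ler_wpM2r // mulr_ge0 //; lra.
Qed.

End classG.

Section fundamental_function_classG.
Variables (R : realType) (S : SymSpace R) (f : R -> R).
Hypotheses (Sf : has_fundamental_function S f) (fG : classG f).
Notation mu := (@lebesgue_measure R).
Implicit Types (x : R -> R).

Lemma ss_nrm_ge_level x c : ss_mem S x -> 0 <= c -> (0 < mu (level x c))%E ->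
  c * f (fine (mu (level x c))) <= ss_nrm S x.
Proof.
move=> xS c0 lvl0; have mlvl := measurable_level c (ss_meas xS).
have [_ <-] := ss_indic_pos Sf mlvl (@level_sub_I01 _ x c) lvl0.
have := ss_nrmZ c (ss_mem_indic Sf mlvl (@level_sub_I01 _ x c)).
rewrite ger0_norm // => <-.
apply: (proj2 (ss_ideal xS _ _)).
  by apply: measurable_funM => //; exact: measurable_indic.
move=> t It; rewrite indic_level // normrM ger0_norm // normr_nat.
by have [/ltW xc|_] := ltP c `|x t|; rewrite ?mulr1 ?mulr0.
Qed.

Lemma measure_level_le x c e : ss_mem S x -> 0 < c -> 0 < e <= 1 ->
  ss_nrm S x < c * f e -> (mu (level x c) <= e%:E)%E.
Proof.
move=> xS c0 /andP[e0 e1] x_lt; rewrite leNgt; apply/negP => e_lt.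
have mlvl := measurable_level c (ss_meas xS).
have lvl0 : (0 < mu (level x c))%E by apply: lt_trans e_lt; rewrite lte_fin.
have := ss_nrm_ge_level xS (ltW c0) lvl0; apply/negP; rewrite -ltNge.
apply: lt_le_trans x_lt _; rewrite ler_pM2l //; apply: classG_le => //.
  by rewrite -lee_fin (measure_I01_fineK mlvl (@level_sub_I01 _ x c)) ltW.
exact: fine_measure_I01_le1 mlvl (@level_sub_I01 _ x c).
Qed.

Lemma measure_level_small x e : ss_mem S x -> 0 < e <= 1 ->
  exists N : nat, forall n, (N <= n)%N -> (mu (level x n%:R) <= e%:E)%E.
Proof.
move=> xS e01; have fe := classG_gt0 fG e01.
exists (Num.bound (ss_nrm S x / f e)).+1 => n Nn.
apply: measure_level_le => //; first by rewrite ltr0n; apply: leq_trans Nn.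
rewrite -ltr_pdivrMr //; apply: lt_le_trans (archi_boundP _) _.
  by rewrite divr_ge0 ?ss_nrm_ge0 // ltW.
by rewrite ler_nat; apply: leq_trans (leqnSn _) Nn.
Qed.

End fundamental_function_classG.

Section dilation.
Variables (R : realType) (f : R -> R).

Lemma dilation_lt_of_index : 0 < lower_dilation_index f ->
  exists t, 0 < t <= 1/2 /\ dilation f t < 1/4.
Proof.
move=> L0; pose h t := ln (dilation f t) / ln t.
(* if h has no limit at 0+, [lim] returns the default value 0 *)
have [[l hl]|nocvg] := pselect (exists l : R, h t @[t --> (0:R)^'+] --> l); last first.
  move: L0; rewrite /lower_dilation_index /lim /lim_in xgetPN ?ltxx //.
  by move=> l hl; apply: nocvg; exists l.
set L := lower_dilation_index f in L0.
have hL : h t @[t --> (0:R)^'+] --> L by exact: cvgP hl.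
pose gam := L / 2; have gam0 : 0 < gam by rewrite divr_gt0.
near (0:R)^'+ => t.
have ht : gam < h t by near: t; apply: (cvgr_gt L hL); rewrite /gam; lra.
have t0 : 0 < t by near: t; exact: nbhs_right_gt.
have t12 : t < 1/2 by near: t; apply: nbhs_right_lt; lra.
have tK : t < expR (- ln 4 / gam) by near: t; exact/nbhs_right_lt/expR_gt0.
exists t; split; first by rewrite t0 /=; lra.
have lnt0 : ln t < 0 by apply: ln_lt0; rewrite t0 /=; lra.
have ln4 : 0 < ln (4 : R) by apply: ln_gt0; lra.
have lnM : ln (dilation f t) < - ln 4.
  apply: lt_trans (_ : gam * ln t < _); first by rewrite -ltr_ndivlMr.
  by rewrite mulrC -ltr_pdivlMr // -[X in _ < X]expRK ltr_ln ?posrE ?expR_gt0.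
have M0 : 0 < dilation f t.
  by rewrite ltNge; apply/negP => M0; move: lnM; rewrite ln0 //; lra.
by rewrite -ltr_ln ?posrE // div1r lnV ?posrE //; lra.
Unshelve. all: by end_near.
Qed.

Lemma le_dilation (t C : R) : (forall s, 0 < s <= 1 -> 0 < f s) -> 0 < t <= 1 ->
  (forall s, 0 < s <= 1 -> f (s * t) <= C * f s) ->
  forall s, 0 < s <= 1 -> f (s * t) <= dilation f t * f s.
Proof.
move=> f_gt0 /andP[t0 t1] fC s s01; rewrite -ler_pdivrMr ?f_gt0 //.
have dom1 : Num.min 1 t^-1 = 1 by rewrite min_l // invf_ge1.
apply: sup_upper_bound; last by exists s; rewrite //= dom1 in_itv.
split; first by exists (f (1 * t) / f 1), 1; rewrite //= dom1 in_itv /= ltr01 lexx.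
exists C => y [u]; rewrite /= dom1 in_itv /= => u01 <-.
by rewrite ler_pdivrMr ?f_gt0 ?fC.
Qed.

End dilation.

Section ratio.
Variables (R : realType) (phi psi : R -> R).
Hypotheses (phiG : classG phi) (psiG : classG psi).
Let g t := psi t / phi t.

Lemma ratio_gt0 t : 0 < t <= 1 -> 0 < g t.
Proof. by move=> t01; rewrite divr_gt0 ?(classG_gt0 phiG) ?(classG_gt0 psiG). Qed.

Lemma ratio_le_dilate r b u : 0 < r <= 1 -> 0 < b <= 1 -> b * r <= u -> u <= b ->
  g u <= 2 / r * g b.
Proof.
move=> /andP[r0 r1] /andP[b0 b1] bru ub.
have u0 : 0 < u by apply: lt_le_trans bru; rewrite mulr_gt0.
have phib : 0 < phi b by apply: (classG_gt0 phiG); rewrite b0.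
have phi_low : r / 2 * phi b <= phi u.
  apply: le_trans (classG_le phiG _ bru (le_trans ub b1)); last by rewrite mulr_gt0.
  by apply: classG_dilate; rewrite ?b0 ?r0.
have -> : 2 / r * g b = psi b / (r / 2 * phi b) by rewrite /g; field; lra.
have u1 : u <= 1 := le_trans ub b1.
rewrite /g ler_pM ?invr_ge0 ?(ltW (classG_gt0 _ _)) ?u0 //; first exact: classG_le.
have phiu : 0 < phi u by apply: (classG_gt0 phiG); rewrite u0 u1.
by rewrite lef_pV2 ?posrE // mulr_gt0 // divr_gt0.
Qed.

Lemma ratio_decay_of_index : 0 < lower_dilation_index g ->
  exists r, 0 < r <= 1/2 /\ forall s, 0 < s <= 1 -> g (s * r) <= g s / 4.
Proof.
move=> /dilation_lt_of_index [r [/andP[r0 r12] dil_r]].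
exists r; split; first by rewrite r0.
have r01 : 0 < r <= 1 by rewrite r0 /=; lra.
move=> s s01; have gs := ratio_gt0 s01.
apply: le_trans (_ : dilation g r * g s <= _); last by nra.
apply: (le_dilation (C := 2 / r)) => //; first exact: ratio_gt0.
move=> v /andP[v0 v1]; apply: ratio_le_dilate; rewrite ?v0 ?v1 //.
by rewrite ler_piMr ?(ltW v0); lra.
Qed.

Variable r : R.
Hypothesis r12 : 0 < r <= 1/2.
Hypothesis decay : forall s, 0 < s <= 1 -> g (s * r) <= g s / 4.

Let r01 : 0 < r <= 1. Proof. by case/andP: r12 => r0 r_half; rewrite r0 /=; lra. Qed.

Lemma ratio_le_pow n b u : 0 < b <= 1 -> b * r ^+ n <= u -> u <= b ->
  g u <= 2 / r * g b.
Proof.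
have [r0 r_half] := andP r12; have two_r : 1 <= 2 / r by rewrite ler_pdivlMr // mul1r; lra.
elim: n b => [|n IH] b b01 bru ub.
  rewrite expr0 mulr1 in bru; rewrite (@le_anti _ _ u b) ?bru ?ub //.
  by rewrite ler_peMl // ltW // ratio_gt0.
have [bu|ub'] := leP (b * r) u; first exact: ratio_le_dilate.
have [b0 b1] := andP b01; have br01 : 0 < b * r <= 1.
  by rewrite mulr_gt0 //= mulr_ile1 ?(ltW b0) ?(ltW r0); lra.
apply: le_trans (IH _ br01 _ (ltW ub')) _; first by rewrite -mulrA -exprS.
rewrite ler_pM2l ?divr_gt0 //; apply: le_trans (decay b01) _.
by have := ratio_gt0 b01; lra.
Qed.

Lemma ratio_le u b : 0 < u -> u <= b -> b <= 1 -> g u <= 2 / r * g b.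
Proof.
move=> u0 ub b1; have b0 : 0 < b by apply: lt_le_trans ub.
have [r0 r_half] := andP r12; have r_lt1 : `|r| < 1 by rewrite gtr0_norm //; lra.
have ub0 : 0 < u / b by rewrite divr_gt0.
have [n rn] := filter_ex (cvgr_lt 0 (cvg_expr r_lt1) _ ub0).
apply: (@ratio_le_pow n) => //; first by rewrite b0.
by rewrite mulrC -ler_pdivlMr // ltW.
Qed.

Lemma ratio_pow_le j : g (r ^+ j) <= (1/4) ^+ j * g 1.
Proof.
have [r0 r_half] := andP r12; elim: j => [|j IH]; first by rewrite !expr0 mul1r.
have rj01 : 0 < r ^+ j <= 1 by rewrite exprn_gt0 //= exprn_ile1 //; lra.
by rewrite exprSr; apply: le_trans (decay rj01) _; rewrite exprSr; lra.
Qed.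

Lemma ratio_le_small j u : 0 < u -> u <= r ^+ j ->
  g u <= 2 / r * ((1/4) ^+ j * g 1).
Proof.
have [r0 r_half] := andP r12; move=> u0 urj.
apply: le_trans (ratio_le u0 urj _) _; first by rewrite exprn_ile1 //; lra.
by rewrite ler_pM2l ?divr_gt0 // ratio_pow_le.
Qed.

End ratio.

Section real_sums.
Variable R : realType.

Lemma le_layer_sum (v lam Q : R) (N : nat) :
  0 <= v -> 0 < lam -> 1 <= Q -> v <= lam * Q ^+ N ->
  v <= lam * (0 < v)%R%:R + \sum_(k < N) lam * Q ^+ k.+1 * (lam * Q ^+ k < v)%R%:R.
Proof.
move=> v0 lam0 Q1; have Q0 : 0 <= Q by apply: le_trans Q1.
have term_ge0 k : 0 <= lam * Q ^+ k.+1 * (lam * Q ^+ k < v)%R%:R.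
  by rewrite !mulr_ge0 ?exprn_ge0 // ltW.
elim: N => [|N IH] vN.
  rewrite expr0 mulr1 in vN; rewrite big_ord0 addr0.
  by have [_|v_le0] := ltP 0 v; rewrite ?mulr1 ?mulr0.
rewrite big_ord_recr /= addrA; have [vN'|Nv] := leP v (lam * Q ^+ N).
  by rewrite mulr0 addr0; apply: IH.
by rewrite mulr1 ler_wpDl // addr_ge0 ?sumr_ge0 ?mulr_ge0 // ltW.
Qed.

Lemma sum_half_pow_le N : \sum_(k < N) (1/2 : R) ^+ k <= 2.
Proof.
suff -> : \sum_(k < N) (1/2 : R) ^+ k = 2 - 2 * (1/2) ^+ N.
  by rewrite gerBl mulr_ge0 // exprn_ge0.
elim: N => [|N IH]; first by rewrite big_ord0 expr0; lra.
by rewrite big_ord_recr /= IH exprSr; lra.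
Qed.

Lemma quarter_pow_le (J k j : nat) : (k <= J)%N -> (j <= J)%N ->
  (1/4 : R) ^+ J <= (1/2) ^+ k * (1/2) ^+ j.
Proof.
move=> kJ jJ; have -> : (1/4 : R) = 1/2 * (1/2) by lra.
by rewrite exprMn ler_pM ?exprn_ge0 // ler_wiXn2l //; lra.
Qed.

Lemma half_pow_lt (c e : R) : 0 <= c -> 0 < e -> exists j : nat, c * (1/2) ^+ j < e.
Proof.
move=> c0 e0; have half_lt1 : `|1/2 : R| < 1 by rewrite ger0_norm; lra.
have ec0 : 0 < e / (c + 1) by rewrite divr_gt0 //; lra.
have [j jlt] := filter_ex (cvgr_lt 0 (cvg_expr half_lt1) _ ec0).
exists j; rewrite ltr_pdivlMr in jlt; last by lra.
by apply: le_lt_trans jlt; rewrite mulrC ler_wpM2l ?exprn_ge0 //; lra.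
Qed.

Lemma exists_pow_ge (Q a : R) : 1 < Q -> exists N : nat, a <= Q ^+ N.
Proof.
move=> Q1; have Q0 : 0 < Q by lra.
have r_lt1 : `|Q^-1| < 1 by rewrite gtr0_norm ?invr_gt0 ?invf_lt1.
have a0 : 0 < (`|a| + 1)^-1 by rewrite invr_gt0; have := normr_ge0 a; lra.
have [N rN] := filter_ex (cvgr_lt 0 (cvg_expr r_lt1) _ a0).
exists N; move: rN; rewrite exprVn ltf_pV2 ?posrE ?exprn_gt0 ?ltr_wpDl //.
by have := ler_norm a; lra.
Qed.

End real_sums.

Definition layer_cake {R : realType} (x : R -> R) (lam Q : R) (N : nat) (t : R) : R :=
  lam * \1_(level x 0) t + \sum_(k < N) lam * Q ^+ k.+1 * \1_(level x (lam * Q ^+ k)) t.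

Section layer_cake.
Variables (R : realType) (x : R -> R) (lam Q : R) (N : nat).
Hypotheses (lam0 : 0 < lam) (Q1 : 1 <= Q).

Lemma le_layer_cake : (forall t, I01 t -> `|x t| <= lam * Q ^+ N) ->
  forall t, I01 t -> `|x t| <= `|layer_cake x lam Q N t|.
Proof.
move=> x_le t It; rewrite /layer_cake !indic_level //.
under eq_bigr do rewrite indic_level //.
exact: le_trans (le_layer_sum (normr_ge0 _) lam0 Q1 (x_le t It)) (ler_norm _).
Qed.

Lemma ss_layer_cake (S : SymSpace R) (f : R -> R) :
  has_fundamental_function S f -> measurable_fun I01 x ->
  ss_mem S (layer_cake x lam Q N) /\
  ss_nrm S (layer_cake x lam Q N) <= lam * ss_nrm S (\1_(level x 0)) +
    \sum_(k < N) lam * Q ^+ k.+1 * ss_nrm S (\1_(level x (lam * Q ^+ k))).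
Proof.
move=> Sf mx; have indS c : ss_mem S (\1_(level x c)).
  by apply: (ss_mem_indic Sf); [exact: measurable_level | exact: level_sub_I01].
have Q0 : 0 <= Q by apply: le_trans Q1.
have [sumS sum_le] := @ss_mem_sum _ _
  (fun k t => lam * Q ^+ k.+1 * \1_(level x (lam * Q ^+ k)) t) N (fun k => ss_memZ _ (indS _)).
split; first by apply: ss_memD => //; apply: ss_memZ.
apply: le_trans (ss_nrmD (ss_memZ _ (indS 0)) sumS) _.
rewrite ss_nrmZ // gtr0_norm // lerD2l; apply: le_trans sum_le _.
by apply: ler_sum => k _; rewrite ss_nrmZ // ger0_norm // mulr_ge0 ?exprn_ge0 // ltW.
Qed.

End layer_cake.

Definition truncate {R : realType} (x : R -> R) (n : nat) (t : R) : R :=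
  x t * \1_(I01 `\` level x n%:R) t.

Section truncation.
Variables (R : realType) (x : R -> R).
Implicit Types (n m : nat) (t : R).

Lemma measurable_truncate n : measurable_fun I01 x -> measurable_fun I01 (truncate x n).
Proof.
move=> mx; apply: measurable_funM => //; apply: measurable_indic.
by apply: measurableD; [exact: measurable_I01 | exact: measurable_level].
Qed.

Lemma truncate_id n t : I01 t -> `|x t| <= n%:R -> truncate x n t = x t.
Proof.
move=> It xn; rewrite /truncate indicE mem_set ?mulr1 //.
by split=> // -[_ /=]; rewrite ltNge xn.
Qed.

Lemma abs_truncate_le n t : `|truncate x n t| <= `|x t|.
Proof.
by rewrite /truncate indicE normrM; case: (_ \in _); rewrite ?normr1 ?normr0 ?mulr1 ?mulr0.
Qed.

Lemma abs_truncate_le_n n t : `|truncate x n t| <= n%:R.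
Proof.
rewrite /truncate indicE; case: (boolP (t \in _)) => [/set_mem [It /= xn]|_].
  by rewrite mulr1 leNgt; apply/negP => nx; apply: xn (conj It nx).
by rewrite mulr0 normr0.
Qed.

Lemma abs_truncateB_le n m t : `|truncate x n t - truncate x m t| <= `|x t|.
Proof.
rewrite /truncate -mulrBr normrM ler_piMr // !indicE.
by case: (_ \in _); case: (_ \in _); rewrite ?subrr ?subr0 ?sub0r ?normrN ?normr1 ?normr0.
Qed.

Lemma level_truncateB_sub N n m : (N <= n)%N -> (N <= m)%N ->
  level (fun t => truncate x n t - truncate x m t) 0 `<=` level x N%:R.
Proof.
move=> Nn Nm t [It /=]; rewrite normr_gt0 => nm_neq; split=> //=; rewrite ltNge.
apply/negP => xN; move: nm_neq; rewrite !truncate_id ?subrr ?eqxx //.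
  by apply: le_trans xN _; rewrite ler_nat.
by apply: le_trans xN _; rewrite ler_nat.
Qed.

End truncation.

Section inclusion.
Variables (R : realType) (phi psi : R -> R) (E F : SymSpace R).
Hypotheses (phiG : classG phi) (psiG : classG psi).
Hypotheses (Ephi : has_fundamental_function E phi) (Fpsi : has_fundamental_function F psi).
Let g t := psi t / phi t.
Variable r : R.
Hypotheses (r12 : 0 < r <= 1/2) (decay : forall s, 0 < s <= 1 -> g (s * r) <= g s / 4).
Notation mu := (@lebesgue_measure R).

Let r0 : 0 < r. Proof. by case/andP: r12. Qed.
Let r1 : r <= 1. Proof. by case/andP: r12 => _ r_half; lra. Qed.
Let g1 : 0 < g 1. Proof. by apply: ratio_gt0; rewrite ?ltr01 ?lexx. Qed.

Let K := 12 / r ^+ 2 * g 1.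
Let K_ge0 : 0 <= K.
Proof. by rewrite /K mulr_ge0 ?(ltW g1) // divr_ge0 // exprn_ge0 // ltW. Qed.

Lemma nrmF_indic_le (B : set R) (c a : R) (J : nat) :
  measurable B -> B `<=` I01 -> 0 <= c -> 0 <= a -> (mu B <= (r ^+ J)%:E)%E ->
  ((0 < mu B)%E -> c * phi (fine (mu B)) <= a) ->
  c * ss_nrm F (\1_B) <= a * (2 / r) * (1/4) ^+ J * g 1.
Proof.
move=> mB BI c0 a0 BJ phi_le.
have [B0|B0] := eqVneq (mu B) 0.
  rewrite (proj2 (ss_indic_null F mB BI B0)) mulr0 mulr_ge0 ?(ltW g1) //.
  by rewrite !mulr_ge0 ?exprn_ge0 ?invr_ge0 ?exprn_ge0 // ltW.
have {}B0 : (0 < mu B)%E by rewrite lt0e B0 measure_ge0.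
rewrite (proj2 (ss_indic_pos Fpsi mB BI B0)); set m := fine (mu B).
have [m0 m1] : 0 < m /\ m <= 1.
  by rewrite -lte_fin (measure_I01_fineK mB BI) B0 fine_measure_I01_le1.
have mJ : m <= r ^+ J by rewrite -lee_fin (measure_I01_fineK mB BI).
have phim : 0 < phi m by apply: (classG_gt0 phiG); rewrite m0.
have -> : c * psi m = c * phi m * g m by rewrite /g; field; rewrite gt_eqF.
apply: le_trans (ler_wpM2r (ltW (ratio_gt0 phiG psiG _)) (phi_le B0)) _; first by rewrite m0.
rewrite -!mulrA ler_wpM2l //; have := ratio_le_small phiG psiG r12 decay m0 mJ.
by rewrite /g /= !mulrA.
Qed.

Section bounded.
Variables (x : R -> R) (j : nat) (M : R).
Hypotheses (xE : ss_mem E x) (supp_x : (mu (level x 0) <= (r ^+ j)%:E)%E).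
Hypotheses (x_le : forall t, I01 t -> `|x t| <= M) (x_gt0 : 0 < ss_nrm E x).
Let rho := ss_nrm E x.
Let lam := 4 * rho / phi 1.
Let Q := r^-1.
(* the base layer costs at most 4 W and the k-th layer W / 2^k, so 6 W = K 2^-j rho *)
Let W := 2 / r ^+ 2 * g 1 * rho * (1/2) ^+ j.

Let rho_gt0 : 0 < rho. Proof. exact: x_gt0. Qed.
Let phi1 : 0 < phi 1. Proof. by apply: (classG_gt0 phiG); rewrite ltr01 lexx. Qed.
Let lam0 : 0 < lam. Proof. by rewrite divr_gt0 ?mulr_gt0. Qed.
Let Q0 : 0 < Q. Proof. by rewrite invr_gt0. Qed.
Let QrK k : Q ^+ k * r ^+ k = 1. Proof. by rewrite -exprMn mulVf ?expr1n ?gt_eqF. Qed.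
Let measurable_level_x c : measurable (level x c).
Proof. exact: measurable_level c (ss_meas xE). Qed.

Lemma measure_layer_le k : (mu (level x (lam * Q ^+ k)) <= (r ^+ k)%:E)%E.
Proof.
have rk01 : 0 < r ^+ k <= 1 by rewrite exprn_gt0 //= exprn_ile1 // ltW.
apply: (measure_level_le Ephi phiG xE) => //; first by rewrite mulr_gt0 ?exprn_gt0.
(* phi (r^k) >= r^k phi 1 / 2, hence lam Q^k phi (r^k) >= 2 rho *)
have := classG_dilate phiG (s := 1) (ltac:(by rewrite ltr01 lexx)) rk01.
rewrite mul1r => phi_rk; apply: lt_le_trans (_ : 2 * rho <= _).
  by rewrite /rho; have := x_gt0; lra.
apply: le_trans (ler_wpM2l (ltW (mulr_gt0 lam0 (exprn_gt0 _ Q0))) phi_rk).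
have -> : lam * Q ^+ k * (r ^+ k / 2 * phi 1) = 2 * rho; last by [].
transitivity (lam * (Q ^+ k * r ^+ k) * (phi 1 / 2)); first by ring.
by rewrite QrK mulr1 /lam; field; rewrite gt_eqF.
Qed.

Let half_rho_ge0 : 0 <= 2 / r ^+ 2 * g 1 * rho.
Proof.
by rewrite mulr_ge0 ?(ltW rho_gt0) // mulr_ge0 ?(ltW g1) // divr_ge0 ?exprn_ge0 // ltW.
Qed.

Lemma nrmF_base_le : lam * ss_nrm F (\1_(level x 0)) <= 4 * W.
Proof.
apply: le_trans (nrmF_indic_le (a := 4 * rho) _ _ _ _ supp_x _) _ => //.
- exact: level_sub_I01.
- exact: ltW.
- by rewrite mulr_ge0 ?ltW.
- move=> x0; rewrite -[4 * rho](divfK (lt0r_neq0 phi1)) -/lam ler_pM2l //.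
  apply: (classG_le phiG) => //; last exact: fine_measure_I01_le1 (@level_sub_I01 _ x 0).
  by rewrite -lte_fin (measure_I01_fineK _ (@level_sub_I01 _ x 0)).
have r_le : 1 / r <= 1 / r ^+ 2.
  by rewrite ler_pM2l // lef_pV2 ?posrE ?exprn_gt0 // expr2 ler_piMr // ltW.
have q_le : (1/4 : R) ^+ j <= (1/2) ^+ j.
  have := @quarter_pow_le R j 0 j (leq0n _) (leqnn _).
  by rewrite expr0 [X in _ <= X -> _]mul1r.
rewrite [leLHS](_ : _ = (8 * g 1 * rho) * (1 / r * (1/4) ^+ j)); last by ring.
rewrite [leRHS](_ : _ = (8 * g 1 * rho) * (1 / r ^+ 2 * (1/2) ^+ j)); last first.
  by rewrite /W; ring.
apply: ler_wpM2l; first by rewrite mulr_ge0 ?(ltW rho_gt0) // mulr_ge0 ?(ltW g1).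
by apply: ler_pM; rewrite ?exprn_ge0 ?divr_ge0 ?(ltW r0).
Qed.

Lemma nrmF_layer_le k :
  lam * Q ^+ k.+1 * ss_nrm F (\1_(level x (lam * Q ^+ k))) <= W * (1/2) ^+ k.
Proof.
have c0 : 0 < lam * Q ^+ k by rewrite mulr_gt0 ?exprn_gt0.
apply: le_trans (nrmF_indic_le (a := Q * rho) (J := maxn k j) _ _ _ _ _ _) _ => //.
- exact: level_sub_I01.
- by rewrite mulr_ge0 ?exprn_ge0 // ltW.
- by rewrite mulr_ge0 ?ltW.
- rewrite /maxn; case: ltnP => [kj|jk]; last exact: measure_layer_le.
  apply: le_trans supp_x; apply: le_measure; rewrite ?inE; try exact: measurable_level_x.
  by apply: le_level; apply: ltW.
- move=> lvl0; rewrite exprS mulrCA -mulrA ler_pM2l //.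
  by apply: (ss_nrm_ge_level Ephi xE (ltW c0)).
rewrite [leLHS](_ : _ = (2 / r ^+ 2 * g 1 * rho) * (1/4) ^+ maxn k j); last first.
  by rewrite /Q; field; rewrite lt0r_neq0.
rewrite [leRHS](_ : _ = (2 / r ^+ 2 * g 1 * rho) * ((1/2) ^+ k * (1/2) ^+ j)); last first.
  by rewrite /W; ring.
by rewrite ler_wpM2l // quarter_pow_le // ?leq_maxl ?leq_maxr.
Qed.

Lemma nrmF_le_bounded_pos : ss_mem F x /\ ss_nrm F x <= K * (1/2) ^+ j * rho.
Proof.
have [N xN] : exists N, forall t, I01 t -> `|x t| <= lam * Q ^+ N.
  have Q_gt1 : 1 < Q by rewrite invf_gt1 //; case/andP: r12 => _; lra.
  have [N MN] := exists_pow_ge (M / lam) Q_gt1.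
  by exists N => t It; apply: le_trans (x_le It) _; rewrite mulrC -ler_pdivrMr.
have Q1 : 1 <= Q by rewrite invf_ge1.
have [yF y_le] := ss_layer_cake N lam0 Q1 Fpsi (ss_meas xE).
have [xF x_leF] := ss_ideal yF (ss_meas xE) (le_layer_cake lam0 Q1 xN).
split => //; apply: le_trans x_leF (le_trans y_le _).
have layers_le : \sum_(k < N) lam * Q ^+ k.+1 * ss_nrm F (\1_(level x (lam * Q ^+ k))) <=
    \sum_(k < N) W * (1/2) ^+ k by apply: ler_sum => k _; exact: nrmF_layer_le.
apply: le_trans (lerD nrmF_base_le layers_le) _.
rewrite -mulr_sumr; have W0 : 0 <= W by rewrite mulr_ge0 ?exprn_ge0.
apply: le_trans (lerD (lexx _) (ler_wpM2l W0 (sum_half_pow_le R N))) _.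
suff -> : 4 * W + W * 2 = K * (1/2) ^+ j * rho by [].
by rewrite /W /K; ring.
Qed.

End bounded.

Lemma nrmF_le_bounded x j M : ss_mem E x -> (mu (level x 0) <= (r ^+ j)%:E)%E ->
  (forall t, I01 t -> `|x t| <= M) ->
  ss_mem F x /\ ss_nrm F x <= K * (1/2) ^+ j * ss_nrm E x.
Proof.
move=> xE supp_x x_le; have [x0|x_gt0] := eqVneq (ss_nrm E x) 0.
  have [xF ->] := ss_null F (ss_meas xE) (proj1 (ss_nrm_eq0 xE) x0).
  by rewrite x0 mulr0.
apply: (nrmF_le_bounded_pos xE supp_x x_le).
by rewrite lt0r x_gt0 ss_nrm_ge0.
Qed.

Section truncation.
Variables (x : R -> R) (j : nat).
Hypotheses (xE : ss_mem E x) (supp_x : (mu (level x 0) <= (r ^+ j)%:E)%E).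
Let rho := ss_nrm E x.
Let rho_ge0 : 0 <= rho. Proof. exact: ss_nrm_ge0. Qed.

Lemma truncate_memE n : ss_mem E (truncate x n) /\ ss_nrm E (truncate x n) <= rho.
Proof.
apply: ss_ideal => //; first exact: measurable_truncate (ss_meas xE).
by move=> t _; apply: abs_truncate_le.
Qed.

Lemma truncate_memF n :
  ss_mem F (truncate x n) /\ ss_nrm F (truncate x n) <= K * (1/2) ^+ j * rho.
Proof.
have [uE uE_le] := truncate_memE n.
have supp_u : (mu (level (truncate x n) 0) <= (r ^+ j)%:E)%E.
  apply: le_trans supp_x; apply: le_measure; rewrite ?inE.
  - exact: measurable_level 0 (measurable_truncate n (ss_meas xE)).
  - exact: measurable_level 0 (ss_meas xE).
  - by move=> t [It /= xt]; split=> //=; apply: lt_le_trans xt (abs_truncate_le _ _ _).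
have [uF uF_le] := nrmF_le_bounded uE supp_u (fun t _ => abs_truncate_le_n x n t).
split => //; apply: le_trans uF_le _; apply: ler_wpM2l uE_le.
by rewrite mulr_ge0 ?exprn_ge0.
Qed.

Lemma truncate_cauchyF e : 0 < e ->
  exists N : nat, forall m n, (N <= m)%N -> (N <= n)%N ->
    ss_nrm F (fun t => truncate x n t - truncate x m t) < e.
Proof.
move=> e0; have [j' Kj'] := half_pow_lt (mulr_ge0 K_ge0 rho_ge0) e0.
have rj'01 : 0 < r ^+ j' <= 1 by rewrite exprn_gt0 //= exprn_ile1 // ltW.
have [N tail] := measure_level_small Ephi phiG xE rj'01.
exists N => m n Nm Nn; set d := fun t => _ - _.
have [dE dE_le] : ss_mem E d /\ ss_nrm E d <= rho.
  apply: ss_ideal => //; last by move=> t _; apply: abs_truncateB_le.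
  by apply: measurable_funB; apply: measurable_truncate (ss_meas xE).
have supp_d : (mu (level d 0) <= (r ^+ j')%:E)%E.
  apply: le_trans (tail N (leqnn N)); apply: le_measure; rewrite ?inE.
  - apply: measurable_level; apply: measurable_funB;
      exact: measurable_truncate (ss_meas xE).
  - exact: measurable_level _ (ss_meas xE).
  - exact: level_truncateB_sub.
have d_le t : I01 t -> `|d t| <= n%:R + m%:R.
  by move=> _; apply: le_trans (ler_normB _ _) (lerD _ _); apply: abs_truncate_le_n.
have [_ dF_le] := nrmF_le_bounded dE supp_d d_le.
apply: le_lt_trans dF_le (le_lt_trans _ Kj'); rewrite mulrAC.
by apply: ler_wpM2r; [rewrite exprn_ge0 | apply: (ler_wpM2l K_ge0)].
Qed.

Lemma truncate_lim_ae z : ss_mem F z ->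
  (forall e, 0 < e -> exists N, forall n, (N <= n)%N ->
     ss_nrm F (fun t => truncate x n t - z t) < e) ->
  ae01 (fun t => x t - z t = 0).
Proof.
move=> zF uz; have mx := ss_meas xE; have mz := ss_meas zF.
apply: ae01_eq0_of_level; first exact: measurable_funB.
move=> c c0; have mD := measurable_level c (measurable_funB mx mz).
apply: (measure_I01_eq0 mD (@level_sub_I01 _ _ c)) => e /andP[e0 e1].
have eps01 : 0 < e / 2 <= 1 by rewrite divr_gt0 //= ler_pdivrMr //; lra.
have [N1 conv] := uz _ (mulr_gt0 c0 (classG_gt0 psiG eps01)).
have [N2 tail] := measure_level_small Ephi phiG xE eps01.
pose n := maxn N1 N2; have m_un : measurable_fun I01 (fun t => truncate x n t - z t).
  exact: measurable_funB (measurable_truncate n mx) mz.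
have sub : level (fun t => x t - z t) c `<=`
    level (fun t => truncate x n t - z t) c `|` level x n%:R.
  move=> t [It /= ct]; have [xn|nx] := leP `|x t| n%:R; last by right.
  by left; split=> //=; rewrite truncate_id.
have mU : measurable (level (fun t => truncate x n t - z t) c `|` level x n%:R).
  by apply: measurableU; exact: measurable_level.
apply: (@le_trans _ _ (mu (level (fun t => truncate x n t - z t) c `|` level x n%:R))).
  by apply: le_measure; rewrite ?inE; [exact: mD | exact: mU | exact: sub].
apply: le_trans (measureU2 _ _ _) _; try exact: measurable_level.
rewrite (splitr e) EFinD leeD //; last by apply: tail; rewrite leq_maxr.
apply: (measure_level_le Fpsi psiG (ss_memB (truncate_memF n).1 zF) c0 eps01).
by apply: conv; rewrite leq_maxl.
Qed.

Lemma nrmF_le : ss_mem F x /\ ss_nrm F x <= K * (1/2) ^+ j * rho.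
Proof.
have [z [zF uz]] := ss_complete (fun n => (truncate_memF n).1) truncate_cauchyF.
have [xF xF_le] := ss_ae_eq zF (ss_meas xE) (truncate_lim_ae zF uz).
split => //; apply: le_trans xF_le _.
exact: ss_nrm_lim_le zF (fun n => (truncate_memF n).1) (fun n => (truncate_memF n).2) uz.
Qed.

End truncation.

Lemma inclusion_DSS_of_decay : inclusion_DSS E F.
Proof.
move=> [xs [xsE [xs_neq0 [xs_disj [c [c0 lower]]]]]].
have [j Kj] := half_pow_lt K_ge0 c0.
have [n small] : exists n, (mu (level (xs n) 0) <= (r ^+ j)%:E)%E.
  apply: ae_disjoint_measure_le; first by rewrite exprn_gt0.
  - by move=> n; apply: measurable_level; exact: ss_meas.
  - by move=> n; exact: level_sub_I01.
  move=> n m nm; apply: negligibleS (xs_disj n m nm) => t [[It /=]].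
  rewrite !normr_gt0 => xn0 [_ /=]; rewrite normr_gt0 => xm0; split=> //=.
  by move/eqP; rewrite mulf_eq0 (negbTE xn0) (negbTE xm0).
have x_gt0 : 0 < ss_nrm E (xs n).
  rewrite lt0r ss_nrm_ge0 // andbT; apply/eqP => /(ss_nrm_eq0 (xsE n)).
  exact: xs_neq0.
have := le_trans (lower _ (clspan_term (xsE n))) (nrmF_le (xsE n) small).2.
by rewrite ler_pM2r // leNgt Kj.
Qed.

End inclusion.

Theorem theorem5 (R : realType) (phi psi : R -> R) (E F : SymSpace R) :
  classG phi -> classG psi ->
  0 < lower_dilation_index (fun t => psi t / phi t) ->
  has_fundamental_function E phi -> has_fundamental_function F psi ->
  (forall x, ss_mem E x -> ss_mem F x) /\
  (exists C : R, forall x, ss_mem E x -> ss_nrm F x <= C * ss_nrm E x) /\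
  inclusion_DSS E F.
Proof.
move=> phiG psiG /(ratio_decay_of_index phiG psiG) [r [r12 decay]] Ephi Fpsi.
pose C := 12 / r ^+ 2 * (psi 1 / phi 1).
have inclusion_le x : ss_mem E x -> ss_mem F x /\ ss_nrm F x <= C * ss_nrm E x.
  move=> xE; have supp_x : (lebesgue_measure (level x 0) <= (r ^+ 0)%:E)%E.
    rewrite expr0; apply: measure_I01_le1 (@level_sub_I01 _ x 0).
    exact: measurable_level 0 (ss_meas xE).
  by have := nrmF_le phiG psiG Ephi Fpsi r12 decay xE supp_x; rewrite expr0 mulr1.
split; first by move=> x /inclusion_le [].
split; first by exists C => x /inclusion_le [].
exact: (inclusion_DSS_of_decay phiG psiG Ephi Fpsi r12 decay).
Qed.
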